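(* $\mathsf{AP}(R_5,R_5)=\operatorname{Pol}(R_5,R'_5)=\mathsf{L}$.
   Context: Tuples in $\{0,1\}^4$ are written as strings $abcd$. The relations $R_1,\dots,R_5\subseteq\{0,1\}^4$ are $R_1=\{0000,1000,0100,1100,1010,0110,1001,0101,0011,1011,0111,1111\}$, $R_2=\{0000,1000,0100,1100,1010,0101,0011,1111\}$, $R_3=\{0000,1100,1010,0101,0011,1011,0111,1111\}$, $R_4=\{0000,1100,1010,0101,0011,1111\}$, $R_5=\{0000,1100,1010,0110,1001,0101,0011,1111\}$. For $R,S\subseteq\{0,1\}^4$, a Boolean function $f\colon\{0,1\}^n\to\{0,1\}$ is analogy-preserving relative to $(R,S)$ if for all $\mathbf{a},\mathbf{b},\mathbf{c},\mathbf{d}\in\{0,1\}^n$ with $(a_i,b_i,c_i,d_i)\in R$ for every $i$ and such that $(f(\mathbf{a}),f(\mathbf{b}),f(\mathbf{c}),x)\in S$ for some $x\in\{0,1\}$, we have $(f(\mathbf{a}),f(\mathbf{b}),f(\mathbf{c}),f(\mathbf{d}))\in S$; $\mathsf{AP}(R,S)$ is the set of all such functions of all arities. $S':=S\cup\{(a,b,c,d)\mid\nexists x\colon(a,b,c,x)\in S\}$, and $\operatorname{Pol}(R,S)$ is the set of Boolean functions $f$ with $f(\mathbf{a}_1,\dots,\mathbf{a}_n)\in S$ (componentwise) for all $\mathbf{a}_1,\dots,\mathbf{a}_n\in R$. $\mathsf{L}$ is the set of affine Boolean functions $f(x_1,\dots,x_n)=c+a_1x_1+\dots+a_nx_n\pmod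 2$ with $c,a_i\in\{0,1\}$. *)

From mathcomp Require Import all_boot.
Set Implicit Arguments. Unset Strict Implicit. Unset Printing Implicit Defensive.

(* Boolean 4-ary relations: subsets of {0,1}^4, false = 0, true = 1. *)
Definition rel4 := bool -> bool -> bool -> bool -> bool.

Definition rel_of (l : seq (bool * bool * bool * bool)) : rel4 :=
  fun a b c d => (a, b, c, d) \in l.

Definition R5 : rel4 := rel_of
  [:: (false,false,false,false); (true,true,false,false);
      (true,false,true,false);  (false,true,true,false);
      (true,false,false,true);  (false,true,false,true);
      (false,false,true,true);  (true,true,true,true)].

Definition boolfun (n : nat) := {ffun 'I_n -> bool} -> bool.

Definition rel_prime (S : rel4) : rel4 :=
  fun a b c d => S a b c d || ~~ [exists x : bool, S a b c x].

Definition compR (R : rel4) n (a b c d : {ffun 'I_n -> bool}) : Prop :=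
  forall i : 'I_n, R (a i) (b i) (c i) (d i).

Definition AP (R S : rel4) n (f : boolfun n) : Prop :=
  forall a b c d : {ffun 'I_n -> bool}, compR R a b c d ->
    (exists x : bool, S (f a) (f b) (f c) x) ->
    S (f a) (f b) (f c) (f d).

(* Polymorphisms: for all columns a_1..a_n in R, applying f to the rows
   yields a tuple in S.  Rows are a, b, c, d : {0,1}^n. *)
Definition Pol (R S : rel4) n (f : boolfun n) : Prop :=
  forall a b c d : {ffun 'I_n -> bool}, compR R a b c d ->
    S (f a) (f b) (f c) (f d).

Definition affine n (f : boolfun n) : Prop :=
  exists (c : bool) (coef : {ffun 'I_n -> bool}),
    forall x : {ffun 'I_n -> bool},
      f x = c (+) \big[addb/false]_(i < n) (coef i && x i).

From mathcomp Require Import all_boot.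

(* R5 is the set of 4-tuples of even parity. It is total in its last
   coordinate, so R5' = R5 and analogy preservation coincides with being a
   polymorphism. A polymorphism f of R5 satisfies
   f x + f y + f 0 + f (x + y) = 0, so x |-> f x + f 0 is additive over GF(2),
   hence linear; conversely affine maps preserve parity. *)

Definition total_last (S : rel4) : Prop :=
  forall a b c, exists x, S a b c x.

Lemma rel_primeE (S : rel4) : total_last S ->
  forall a b c d, rel_prime S a b c d = S a b c d.
Proof.
move=> totS a b c d; rewrite /rel_prime.
suff -> : [exists x, S a b c x] by rewrite orbF.
by have [x Sx] := totS a b c; apply/existsP; exists x.
Qed.

Lemma Pol_rel_prime (R S : rel4) n (f : boolfun n) : total_last S ->
  Pol R (rel_prime S) f <-> Pol R S f.
Proof.
by move=> totS; split=> fP a b c d abcd; have := fP a b c d abcd;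
  rewrite rel_primeE.
Qed.

Lemma AP_Pol (R S : rel4) n (f : boolfun n) : total_last S ->
  AP R S f <-> Pol R S f.
Proof.
move=> totS; split=> fP a b c d abcd; last by move=> _; apply: fP.
exact: fP (totS _ _ _).
Qed.

Lemma R5E a b c d : R5 a b c d = ~~ (a (+) b (+) c (+) d).
Proof. by case: a; case: b; case: c; case: d; vm_compute. Qed.

Lemma R5_total_last : total_last R5.
Proof. by move=> a b c; exists (a (+) b (+) c); rewrite R5E addbb. Qed.

Section BoolVectors.

Variable n : nat.
Local Notation vec := {ffun 'I_n -> bool}.

Definition vec0 : vec := [ffun => false].
Definition vadd (x y : vec) : vec := [ffun j => x j (+) y j].
Definition unit_vec (i : 'I_n) : vec := [ffun j => j == i].

Lemma vec_decomp (x : vec) :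
  x = \big[vadd/vec0]_i (if x i then unit_vec i else vec0).
Proof.
apply/ffunP => j.
rewrite (big_morph (fun v : vec => v j) (id1 := false) (op1 := addb)) => [|u v|];
  rewrite ?ffunE //.
rewrite (bigD1 j) //= big1 => [|i /negbTE ij].
  by case: (x j); rewrite ffunE ?eqxx addbF.
by case: (x i); rewrite ffunE // eq_sym ij.
Qed.

Lemma additive_linear (g : vec -> bool) :
  {morph g : x y / vadd x y >-> x (+) y} ->
  forall x, g x = \big[addb/false]_(i < n) (g (unit_vec i) && x i).
Proof.
move=> gD x.
have g0 : g vec0 = false.
  have : vadd vec0 vec0 = vec0 by apply/ffunP => j; rewrite !ffunE.
  by move/(congr1 g); rewrite gD; case: (g vec0).
rewrite {1}(vec_decomp x) (big_morph g gD g0).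
by apply: eq_bigr => i _; case: (x i); rewrite ?andbT ?andbF.
Qed.

Lemma Pol_R5_affine (f : boolfun n) : Pol R5 R5 f -> affine f.
Proof.
move=> fP; pose g x := f x (+) f vec0.
have gD : {morph g : x y / vadd x y >-> x (+) y}.
  move=> x y; have xy0 : compR R5 x y vec0 (vadd x y).
    by move=> i; rewrite R5E !ffunE; case: (x i); case: (y i).
  have := fP _ _ _ _ xy0; rewrite R5E /g.
  by case: (f x); case: (f y); case: (f vec0); case: (f (vadd x y)).
exists (f vec0), [ffun i => g (unit_vec i)] => x.
under eq_bigr do rewrite ffunE.
by rewrite -(@additive_linear g gD) /g addbC addbK.
Qed.

Lemma affine_Pol_R5 (f : boolfun n) : affine f -> Pol R5 R5 f.
Proof.
move=> [c [coef fE]] a b d e abde.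
have addb4_cancel k p q r s : k (+) p (+) (k (+) q) (+) (k (+) r) (+) (k (+) s)
    = p (+) q (+) r (+) s.
  by case: k; case: p; case: q; case: r; case: s.
rewrite R5E !fE addb4_cancel -!big_split big1 // => i _.
move: (abde i); rewrite R5E.
by case: (coef i); case: (a i); case: (b i); case: (d i); case: (e i).
Qed.

End BoolVectors.

Theorem mainTheorem10 :
  forall (n : nat) (f : boolfun n),
    (AP R5 R5 f <-> Pol R5 (rel_prime R5) f) /\
    (Pol R5 (rel_prime R5) f <-> affine f).
Proof.
move=> n f.
have polE := Pol_rel_prime R5 R5 n f R5_total_last.
split; first exact: iff_trans (AP_Pol R5 R5 n f R5_total_last) (iff_sym polE).
exact: iff_trans polE (conj (@Pol_R5_affine n f) (@affine_Pol_R5 n f)).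
Qed.
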